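(* Let $1\le k<n$ and $A\in\mathbb{H}_n$. The following are equivalent: (a) $A=\gamma I$ for some $\gamma\in\mathbb{R}$; (b) $A\parallel B$ for every $B\in\mathbb{H}_n$; (c) $A\parallel P$ for every rank-$k$ orthogonal projection $P\in\mathbb{H}_n$.
   Context: $\mathbb{H}_n$ is the real space of $n\times n$ Hermitian matrices. $w_k(A)=\max\{|\operatorname{tr}(AP)|: P=P^*=P^2,\operatorname{tr}P=k\}$. For $A,B\in\mathbb{H}_n$, $A\parallel B$ means $w_k(A+\mu B)=w_k(A)+w_k(B)$ for some $\mu\in\{1,-1\}$. *)

From HB Require Import structures.
From mathcomp Require Import all_boot all_order all_algebra.
From mathcomp Require Import complex.
From mathcomp Require Import boolp classical_sets reals.
Set Implicit Arguments. Unset Strict Implicit. Unset Printing Implicit Defensive.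
Import Order.TTheory GRing.Theory Num.Theory.
Local Open Scope ring_scope.
Local Open Scope classical_set_scope.

Definition rC (R : realType) (x : R) : R[i] := (x%:C)%C.

Definition adjmx (R : realType) (n : nat) (A : 'M[R[i]]_n) : 'M[R[i]]_n :=
  (map_mx Num.conj A)^T.

Definition herm_mx (R : realType) (n : nat) (A : 'M[R[i]]_n) : Prop :=
  adjmx A = A.

Definition trk_proj (R : realType) (n k : nat) (P : 'M[R[i]]_n) : Prop :=
  [/\ adjmx P = P, P *m P = P & \tr P = k%:R].

(* w_k(A) = max { |tr(AP)| : P = P^* = P^2, tr P = k }, written as a supremum
   (the maximum is attained by compactness, so max = sup). *)
Definition wk (R : realType) (n k : nat) (A : 'M[R[i]]_n) : R :=
  sup [set x : R | exists P : 'M[R[i]]_n,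
         trk_proj k P /\ x = ComplexField.Normc.normc (\tr (A *m P))].

Definition kparallel (R : realType) (n k : nat) (A B : 'M[R[i]]_n) : Prop :=
  exists mu : R, (mu = 1 \/ mu = -1) /\
    wk k (A + rC mu *: B) = wk k A + wk k B.

Definition rank_proj (R : realType) (n k : nat) (P : 'M[R[i]]_n) : Prop :=
  [/\ adjmx P = P, P *m P = P & \rank P = k].

(* (a) => (b): for A = g I the trace tr((A + mu B) Q) = g k + mu tr(BQ) is real, and one of
   tr(BQ), -tr(BQ) comes arbitrarily close to w_k(B) over the projections Q; choosing mu
   so that this sign matches the sign of g gives w_k(A + mu B) = |g| k + w_k(B).
   (c) => (a): if A || P for a rank-k projection P, then |tr(AP)| = w_k(A), because a
   near-maximiser Q of w_k(A + mu P) must have tr(PQ) close to k and is therefore close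
   to P in the Frobenius norm. Write A = V^* D V with D real diagonal and take for P the
   conjugates of diag(1,...,1,0,...,0) by a rotation in the plane of an eigenvector a
   inside the first k and one b outside: tr(AP) = T - d_a + c^2 d_a + s^2 d_b. At the
   angles 0, pi/2 and pi/4 these three values have the same modulus w_k(A), and the
   third is the midpoint of the first two, so d_a = d_b. *)

From HB Require Import structures.
From mathcomp Require Import all_boot all_order all_algebra.
From mathcomp Require Import complex.
From mathcomp Require Import boolp classical_sets reals.
From mathcomp Require Import ring lra.
Set Implicit Arguments. Unset Strict Implicit. Unset Printing Implicit Defensive.
Import Order.TTheory GRing.Theory Num.Theory.
Local Open Scope ring_scope.
Local Open Scope sesquilinear_scope.

Local Notation normc := ComplexField.Normc.normc.

Section ComplexModulus.
Variable R : realType.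

Lemma normcE (x : R[i]) : `|x| = ((normc x)%:C)%C.
Proof. by case: x => a b; rewrite normc_def. Qed.

Lemma normc_ge0 (x : R[i]) : 0 <= normc x.
Proof. by case: x => a b; exact: sqrtr_ge0. Qed.

Lemma normc_rC (t : R) : normc (rC t) = `|t|.
Proof. by rewrite /ComplexField.Normc.normc /= expr0n /= addr0 sqrtr_sqr. Qed.

Lemma normc_sum (I : finType) (F : I -> R[i]) :
  normc (\sum_i F i) <= \sum_i normc (F i).
Proof.
elim/big_rec2: _ => [|i y x _ IH]; first by rewrite ComplexField.Normc.normc0.
by apply: le_trans (le_normcD _ _) _; rewrite lerD2l.
Qed.

Lemma conj_rC (t : R) : Num.conj (rC t) = rC t.
Proof. exact: conjc_real. Qed.

Lemma rC_Re_conj_fixed (x : R[i]) : Num.conj x = x -> rC (complex.Re x) = x.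
Proof. by move/CrealP; exact: RRe_real. Qed.

End ComplexModulus.

Section Adjoint.
Variables (R : realType) (n : nat).
Implicit Types A B : 'M[R[i]]_n.

Lemma adjmxE A : adjmx A = A ^t*.
Proof. by rewrite /adjmx map_trmx. Qed.

Lemma adjmxK A : adjmx (adjmx A) = A.
Proof. by rewrite !adjmxE trmxCK. Qed.

Lemma adjmxM A B : adjmx (A *m B) = adjmx B *m adjmx A.
Proof. by rewrite /adjmx map_mxM trmx_mul. Qed.

Lemma adjmxB A B : adjmx (A - B) = adjmx A - adjmx B.
Proof. by rewrite /adjmx map_mxB linearB. Qed.

Lemma adjmx1 : adjmx (1%:M : 'M[R[i]]_n) = 1%:M.
Proof. by rewrite /adjmx map_mx1 trmx1. Qed.

Lemma adjmx_pid k : adjmx (pid_mx k : 'M[R[i]]_n) = pid_mx k.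
Proof. by rewrite /adjmx (map_pid_mx (Num.conj_op : {rmorphism R[i] -> R[i]})) tr_pid_mx. Qed.

Lemma adjmx_entry A i j : adjmx A i j = Num.conj (A j i).
Proof. by rewrite !mxE. Qed.

Lemma mxtrace_adjmx A : \tr (adjmx A) = Num.conj (\tr A).
Proof. by rewrite /adjmx mxtrace_tr trace_map_mx. Qed.

Lemma mxtrace_herm_mul A B : herm_mx A -> adjmx B = B ->
  rC (complex.Re (\tr (A *m B))) = \tr (A *m B).
Proof.
move=> hA hB; apply: rC_Re_conj_fixed.
by rewrite -mxtrace_adjmx adjmxM hA hB mxtrace_mulC.
Qed.

End Adjoint.

Section Frobenius.
Variables (R : realType) (n : nat).
Implicit Types A M D : 'M[R[i]]_n.

Definition frob_sqr A : R := \sum_i \sum_j normc (A i j) ^+ 2.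

Definition entry_sum M : R := \sum_i \sum_j normc (M i j).

Lemma mxtrace_mul_adjmx A : \tr (A *m adjmx A) = rC (frob_sqr A).
Proof.
rewrite /mxtrace /frob_sqr /rC rmorph_sum; apply: eq_bigr => i _.
rewrite !mxE rmorph_sum; apply: eq_bigr => j _.
by rewrite !mxE rmorphXn /= -normcE sqr_normc.
Qed.

Lemma frob_sqr_ge0 A : 0 <= frob_sqr A.
Proof. by apply: sumr_ge0 => i _; apply: sumr_ge0 => j _; apply: sqr_ge0. Qed.

Lemma sqr_normc_entry_le A i j : normc (A i j) ^+ 2 <= frob_sqr A.
Proof.
rewrite /frob_sqr (bigD1 i) //= (bigD1 j) //= -addrA lerDl.
apply: addr_ge0; first by apply: sumr_ge0 => ? _; apply: sqr_ge0.
by apply: sumr_ge0 => ? _; apply: sumr_ge0 => ? _; apply: sqr_ge0.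
Qed.

Lemma normc_entry_le (eta : R) A i j : 0 <= eta -> frob_sqr A <= eta ^+ 2 ->
  normc (A i j) <= eta.
Proof.
move=> eta0 hA; rewrite -(ler_pXn2r (_ : 0 < 2)%N) ?nnegrE ?normc_ge0 //.
exact: le_trans (sqr_normc_entry_le A i j) hA.
Qed.

Lemma entry_sum_ge0 M : 0 <= entry_sum M.
Proof. by apply: sumr_ge0 => i _; apply: sumr_ge0 => j _; apply: normc_ge0. Qed.

Lemma normc_mxtrace_mul_le M D (eta : R) : (forall i j, normc (D i j) <= eta) ->
  normc (\tr (M *m D)) <= entry_sum M * eta.
Proof.
move=> hD; rewrite /mxtrace /entry_sum mulr_suml.
apply: le_trans (normc_sum _) _; apply: ler_sum => i _.
rewrite mxE mulr_suml; apply: le_trans (normc_sum _) _; apply: ler_sum => j _.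
by rewrite ComplexField.Normc.normcM ler_wpM2l ?normc_ge0.
Qed.

End Frobenius.

Section OrthogonalProjection.
Variables (R : realType) (n k : nat).
Implicit Types P Q : 'M[R[i]]_n.

Definition orth_proj P := adjmx P = P /\ P *m P = P.

Lemma orth_proj_compl P : orth_proj P -> orth_proj (1%:M - P).
Proof.
case=> aP iP; split; first by rewrite adjmxB adjmx1 aP.
by rewrite mulmxBl mul1mx mulmxBr mulmx1 iP subrr subr0.
Qed.

Lemma mxtrace_orth_proj_mul P Q : orth_proj P -> orth_proj Q ->
  \tr (P *m Q) = rC (frob_sqr (Q *m P)).
Proof.
case=> aP iP [aQ iQ]; rewrite -mxtrace_mul_adjmx adjmxM aP aQ.
rewrite mulmxA -(mulmxA Q P P) iP [RHS]mxtrace_mulC mulmxA iQ.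
by rewrite mxtrace_mulC.
Qed.

Lemma trk_proj_orth P : trk_proj k P -> orth_proj P.
Proof. by case. Qed.

Lemma frob_sqr_trk_proj P : trk_proj k P -> frob_sqr P = k%:R.
Proof.
case=> aP iP tP; apply: (@complexI R).
by rewrite -[LHS]/(rC _) -mxtrace_mul_adjmx aP iP tP /rC rmorph_nat.
Qed.

Lemma normc_trk_proj_entry P i j : (1 <= k)%N -> trk_proj k P ->
  normc (P i j) <= k%:R.
Proof.
move=> k1 hP; apply: normc_entry_le; first exact: ler0n.
rewrite (frob_sqr_trk_proj hP) -natrX ler_nat.
by rewrite -[X in (X <= _)%N]muln1 expnS leq_mul2l k1 orbT.
Qed.

Lemma mxtrace_trk_proj_mul P Q : trk_proj k P -> trk_proj k Q ->
  exists2 r : R, \tr (P *m Q) = rC r & 0 <= r <= k%:R.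
Proof.
move=> hP hQ; have [oP oQ] := (trk_proj_orth hP, trk_proj_orth hQ).
exists (frob_sqr (Q *m P)); first exact: mxtrace_orth_proj_mul.
rewrite frob_sqr_ge0 /= -subr_ge0.
have := mxtrace_orth_proj_mul (orth_proj_compl oP) oQ.
rewrite mulmxBl mul1mx raddfB /= (mxtrace_orth_proj_mul oP oQ).
case: hQ => _ _ ->; rewrite /rC -(rmorph_nat (real_complex R)) -rmorphB.
by move/complexI ->; apply: frob_sqr_ge0.
Qed.

Lemma frob_sqr_trk_proj_sub P Q r : trk_proj k P -> trk_proj k Q ->
  \tr (P *m Q) = rC r -> frob_sqr (P - Q) = 2 * k%:R - 2 * r.
Proof.
move=> [aP iP tP] [aQ iQ tQ] hr; apply: (@complexI R).
rewrite -[LHS]/(rC _) -mxtrace_mul_adjmx adjmxB aP aQ.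
rewrite mulmxBl !mulmxBr iP iQ !raddfB /= tP tQ (mxtrace_mulC Q P) hr.
by rewrite /rC !rmorphM /= !rmorph_nat; ring.
Qed.

Lemma normc_mxtrace_near_trk_proj A P Q r (eta : R) :
  trk_proj k P -> trk_proj k Q -> \tr (P *m Q) = rC r ->
  0 <= eta -> 2 * k%:R - 2 * r <= eta ^+ 2 ->
  normc (\tr (A *m Q)) <= normc (\tr (A *m P)) + entry_sum A * eta.
Proof.
move=> hP hQ hr eta0 r_near.
have trQP : \tr (Q *m P) = rC r by rewrite mxtrace_mulC.
have QP_small i j : normc ((Q - P) i j) <= eta.
  by apply: normc_entry_le; rewrite // (frob_sqr_trk_proj_sub hQ hP trQP).
rewrite -[Q](subrK P) mulmxDr raddfD addrC /=.
apply: le_trans (le_normcD _ _) _; rewrite lerD2l.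
exact: normc_mxtrace_mul_le.
Qed.

End OrthogonalProjection.

Lemma sum_delta_mul (T : nzRingType) n (f : 'I_n -> T) (a : 'I_n) :
  \sum_z (z == a)%:R * f z = f a.
Proof.
by rewrite (bigD1 a) //= eqxx mul1r big1 ?addr0 // => z /negPf ->; rewrite mul0r.
Qed.

Lemma mxtrace_mul_pid (T : nzRingType) m k (X : 'M[T]_m) :
  \tr (X *m pid_mx k) = \sum_(l < m | (l < k)%N) X l l.
Proof.
rewrite /mxtrace [RHS]big_mkcond /=; apply: eq_bigr => l _.
rewrite mxE (bigD1 l) //= mxE eqxx /= big1 => [|z zl]; last first.
  by rewrite mxE val_eqE (negPf zl) mulr0.
by case: ifP; rewrite ?mulr1 ?mulr0 addr0.
Qed.

Lemma sup_eq_approx (R : realType) (E : set R) (c : R) :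
  (exists x, E x) -> (forall x, E x -> x <= c) ->
  (forall eps, 0 < eps -> exists2 x, E x & c - eps < x) -> sup E = c.
Proof.
move=> [x0 Ex0] ub approx.
have hs : has_sup E by split; [exists x0 | exists c => y /ub].
apply/le_anti/andP; split; first by apply: ge_sup; [exists x0 | move=> y /ub].
apply/ler_addgt0Pr => e e0; have [x Ex lt] := approx e e0.
have := sup_upper_bound hs Ex; lra.
Qed.

Lemma sign_approx_sup (R : realType) (T : Type) (E : T -> Prop) (f : T -> R) (W : R) :
  (forall eps, 0 < eps -> exists2 t, E t & W - eps < `|f t|) ->
  exists2 s : R, s = 1 \/ s = -1 &
    forall eps, 0 < eps -> exists2 t, E t & W - eps < s * f t.
Proof.
move=> approx.
have [pos|] := pselect (forall eps, 0 < eps -> exists2 t, E t & W - eps < f t).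
  by exists 1; [left | move=> e /pos [t Et lt]; exists t; rewrite ?mul1r].
move=> /existsNP [e0 /not_implyP [e0_gt0 not_pos]].
exists (-1); first by right.
move=> e e_gt0; have e'_gt0 : 0 < Num.min e e0 by rewrite lt_min e_gt0.
have [t Et lt] := approx _ e'_gt0; exists t => //.
have : f t <= W - e0 by rewrite leNgt; apply/negP => ?; apply: not_pos; exists t.
have : Num.min e e0 <= e by rewrite ge_min lexx.
have : Num.min e e0 <= e0 by rewrite ge_min lexx orbT.
by move: lt; case: (ler0P (f t)) => ? ? ? ? ?; lra.
Qed.


Section NumericalRadius.
Variables (R : realType) (n k : nat).
Hypotheses (k_ge1 : (1 <= k)%N) (k_le_n : (k <= n)%N).
Implicit Types A B M P Q : 'M[R[i]]_n.

Lemma trk_proj_pid : trk_proj k (pid_mx k : 'M[R[i]]_n).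
Proof.
split; [exact: adjmx_pid | exact: pid_mx_id | ].
rewrite -[pid_mx k]mul1mx mxtrace_mul_pid (big_ord_narrow k_le_n).
by under eq_bigr do rewrite mxE eqxx; rewrite sumr_const card_ord.
Qed.

Local Open Scope classical_set_scope.

Let wset M := [set x : R | exists P, trk_proj k P /\ x = normc (\tr (M *m P))].

Let wset_has_sup M : has_sup (wset M).
Proof.
split; first by exists (normc (\tr (M *m pid_mx k))), (pid_mx k); split => //; exact: trk_proj_pid.
exists (entry_sum M * k%:R) => x [Q [hQ ->]].
by apply: normc_mxtrace_mul_le => i j; apply: normc_trk_proj_entry.
Qed.

Lemma normc_mxtrace_le_wk M Q : trk_proj k Q -> normc (\tr (M *m Q)) <= wk k M.
Proof. by move=> hQ; apply: (sup_upper_bound (wset_has_sup M)); exists Q. Qed.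

Lemma wk_approx M eps : 0 < eps ->
  exists2 Q, trk_proj k Q & wk k M - eps < normc (\tr (M *m Q)).
Proof.
by move=> e0; have [x [Q [hQ ->]] lt] := sup_adherent e0 (wset_has_sup M); exists Q.
Qed.

Lemma wk_eq M c : (forall Q, trk_proj k Q -> normc (\tr (M *m Q)) <= c) ->
  (forall eps, 0 < eps -> exists2 Q, trk_proj k Q & c - eps < normc (\tr (M *m Q))) ->
  wk k M = c.
Proof.
move=> ub approx; apply: sup_eq_approx.
- by exists (normc (\tr (M *m pid_mx k))), (pid_mx k); split => //; exact: trk_proj_pid.
- by move=> x [Q [hQ ->]]; apply: ub.
- move=> e e0; have [Q hQ lt] := approx e e0.
  by exists (normc (\tr (M *m Q))) => //; exists Q.
Qed.

Lemma wk_trk_proj P : trk_proj k P -> wk k P = k%:R.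
Proof.
move=> hP; apply: wk_eq => [Q hQ|e e0].
  have [r -> /andP[r0 rk]] := mxtrace_trk_proj_mul hP hQ.
  by rewrite normc_rC ger0_norm.
exists P => //; case: (hP) => _ -> ->.
have -> : (k%:R : R[i]) = rC k%:R by rewrite /rC rmorph_nat.
by rewrite normc_rC ger0_norm ?ler0n //; lra.
Qed.

Lemma wk_opp M : wk k (- M) = wk k M.
Proof.
rewrite /wk; congr sup; apply/seteqP; split => x [P [hP ->]]; exists P;
  by rewrite mulNmx raddfN /= normcN.
Qed.

Lemma kparallel_oppl A B : kparallel k A B -> kparallel k (- A) B.
Proof.
move=> [mu [hmu par]]; exists (- mu); split; first by case: hmu => ->; rewrite ?opprK; auto.
by rewrite /rC rmorphN scaleNr -opprD !wk_opp.
Qed.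

Lemma mxtrace_scalar_mul (g : R) Q : trk_proj k Q ->
  \tr ((rC g)%:M *m Q) = rC (g * k%:R).
Proof. by case=> _ _ tQ; rewrite mul_scalar_mx mxtraceZ tQ /rC rmorphM rmorph_nat. Qed.

Lemma wk_scalar (g : R) : wk k ((rC g)%:M : 'M[R[i]]_n) = `|g| * k%:R.
Proof.
have abs_gk : `|g * k%:R| = `|g| * k%:R by rewrite normrM normr_nat.
apply: wk_eq => [Q hQ|e e0].
  by rewrite mxtrace_scalar_mul // normc_rC abs_gk.
exists (pid_mx k); first exact: trk_proj_pid.
rewrite mxtrace_scalar_mul ?normc_rC ?abs_gk; [lra | exact: trk_proj_pid].
Qed.

Lemma scalar_kparallel (g : R) B : herm_mx B -> kparallel k (rC g)%:M B.
Proof.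
move=> hB; wlog g_ge0 : g / 0 <= g => [wlog_g|].
  have [|g_lt0] := lerP 0 g; first exact: wlog_g.
  have -> : (rC g)%:M = - (rC (- g))%:M :> 'M_n by rewrite /rC rmorphN raddfN opprK.
  by apply/kparallel_oppl/wlog_g; rewrite oppr_ge0 ltW.
pose t Q := complex.Re (\tr (B *m Q)).
have normc_t Q : trk_proj k Q -> normc (\tr (B *m Q)) = `|t Q|.
  by move=> hQ; rewrite -(mxtrace_herm_mul hB (trk_proj_orth hQ).1) normc_rC.
have [s hs approx] : exists2 s : R, s = 1 \/ s = -1 &
    forall eps, 0 < eps -> exists2 Q, trk_proj k Q & wk k B - eps < s * t Q.
  apply: sign_approx_sup => e e0; have [Q hQ lt] := wk_approx B e0.
  by exists Q; rewrite -?normc_t.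
have tr_sum Q : trk_proj k Q ->
    \tr (((rC g)%:M + rC s *: B) *m Q) = rC (g * k%:R + s * t Q).
  move=> hQ; rewrite mulmxDl -scalemxAl raddfD /= mxtraceZ mxtrace_scalar_mul //.
  by rewrite -(mxtrace_herm_mul hB (trk_proj_orth hQ).1) /rC rmorphD !rmorphM.
have abs_s : `|s| = 1 by case: hs => ->; rewrite ?normrN normr1.
exists s; split => //; rewrite wk_scalar (ger0_norm g_ge0).
apply: wk_eq => [Q hQ|e e0].
  rewrite tr_sum // normc_rC; apply: le_trans (ler_normD _ _) _.
  rewrite !normrM abs_s mul1r normr_nat (ger0_norm g_ge0) lerD2l -normc_t //.
  exact: normc_mxtrace_le_wk.
have [Q hQ lt] := approx e e0; exists Q => //.
rewrite tr_sum // normc_rC; apply: lt_le_trans (ler_norm _).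
by rewrite -addrA ltrD2l.
Qed.

Lemma kparallel_trk_proj A P : trk_proj k P -> kparallel k A P ->
  normc (\tr (A *m P)) = wk k A.
Proof.
move=> hP [mu [hmu]]; rewrite (wk_trk_proj hP) => par.
apply/le_anti/andP; split; first exact: normc_mxtrace_le_wk.
rewrite leNgt; apply/negP => lt_wk.
set a := normc _ in lt_wk *; set d := wk k A - a.
have d_gt0 : 0 < d by rewrite subr_gt0.
set K := entry_sum A; have K_ge0 : 0 <= K := entry_sum_ge0 A.
set eta := d / (2 * (K + 1)).
have eta_gt0 : 0 < eta by apply: divr_gt0 => //; lra.
have K_eta : K * eta <= d / 2.
  have : (K + 1) * eta = d / 2 by rewrite /eta; field; lra.
  nra.
set e := Num.min (d / 2) (eta ^+ 2 / 2).
have e_gt0 : 0 < e by rewrite lt_min; apply/andP; split; [lra | apply: divr_gt0 => //; apply: exprn_gt0].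
have e_le1 : e <= d / 2 by rewrite ge_min lexx.
have e_le2 : e <= eta ^+ 2 / 2 by rewrite ge_min lexx orbT.
have [Q hQ] := wk_approx (A + rC mu *: P) e_gt0; rewrite par.
have [r trPQ /andP[r_ge0 r_le]] := mxtrace_trk_proj_mul hP hQ.
have -> : \tr ((A + rC mu *: P) *m Q) = \tr (A *m Q) + rC (mu * r).
  by rewrite mulmxDl -scalemxAl raddfD /= mxtraceZ trPQ /rC rmorphM.
move=> lt_sum.
have le_sum : normc (\tr (A *m Q) + rC (mu * r)) <= normc (\tr (A *m Q)) + r.
  apply: le_trans (le_normcD _ _) _; rewrite normc_rC normrM (ger0_norm r_ge0).
  by case: hmu => ->; rewrite ?normrN normr1 mul1r.
have le_wk := normc_mxtrace_le_wk A hQ.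
have near_P : normc (\tr (A *m Q)) <= a + K * eta.
  by apply: (normc_mxtrace_near_trk_proj A hP hQ trPQ (ltW eta_gt0)); lra.
rewrite /d in K_eta e_le1; lra.
Qed.

End NumericalRadius.

Section UnitaryConjugate.
Variables (R : realType) (n k : nat).
Hypothesis k_le_n : (k <= n)%N.
Implicit Types U V : 'M[R[i]]_n.

Lemma unitary_adjmx_mul U : U \is unitarymx -> adjmx U *m U = 1%:M.
Proof. by move=> uU; rewrite adjmxE -invmx_unitary // mulVmx // unitarymx_unit. Qed.

Lemma unitary_mul_adjmx U : U \is unitarymx -> U *m adjmx U = 1%:M.
Proof. by move=> /unitarymxP; rewrite adjmxE. Qed.

Definition proj_of_unitary U : 'M[R[i]]_n := adjmx U *m pid_mx k *m U.

Lemma trk_proj_of_unitary U : U \is unitarymx -> trk_proj k (proj_of_unitary U).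
Proof.
move=> /unitary_mul_adjmx uU; split.
- by rewrite /proj_of_unitary !adjmxM adjmxK adjmx_pid mulmxA.
- rewrite /proj_of_unitary -!mulmxA (mulmxA U) (mulmxA (U *m adjmx U)) uU mul1mx.
  by rewrite (mulmxA (pid_mx k)) pid_mx_id.
- by rewrite mxtrace_mulC mulmxA uU mul1mx; case: (trk_proj_pid R k_le_n).
Qed.

Lemma rank_proj_of_unitary U : U \is unitarymx -> rank_proj k (proj_of_unitary U).
Proof.
move=> uU; have [aP iP _] := trk_proj_of_unitary uU; split => //.
have fU : row_free U by rewrite row_free_unit unitarymx_unit.
have fU' : row_full (adjmx U) by rewrite adjmxE row_full_unit unitarymx_unit ?trmxC_unitary.
by rewrite /proj_of_unitary mxrankMfree // eqmxMfull // rank_pid_mx.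
Qed.

Lemma mxtrace_mul_proj_of_unitary V W (d : 'rV[R[i]]_n) :
  V \is unitarymx ->
  \tr ((adjmx V *m diag_mx d *m V) *m proj_of_unitary (W *m V))
    = \tr (W *m diag_mx d *m adjmx W *m pid_mx k).
Proof.
move=> /unitary_mul_adjmx uV; rewrite /proj_of_unitary adjmxM.
rewrite !mulmxA -(mulmxA _ V (adjmx V)) uV mulmx1.
rewrite mxtrace_mulC !mulmxA uV mul1mx.
by rewrite mxtrace_mulC !mulmxA.
Qed.

End UnitaryConjugate.

Section Rotation.
Variables (R : realType) (n : nat) (a b : 'I_n) (c s : R).
Hypothesis a_neq_b : a != b.
Local Notation C := R[i].

Definition rotmx : 'M[C]_n := \matrix_(x, z)
  if x == a then rC c * (z == a)%:R + rC s * (z == b)%:R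
  else if x == b then - rC s * (z == a)%:R + rC c * (z == b)%:R
  else (z == x)%:R.

Lemma rotmx_sum x (f : 'I_n -> C) : \sum_z rotmx x z * f z =
  if x == a then rC c * f a + rC s * f b
  else if x == b then - rC s * f a + rC c * f b else f x.
Proof.
under eq_bigr => z _ do rewrite mxE.
case: ifP => _; last case: ifP => _; last by rewrite sum_delta_mul.
all: under eq_bigr => z _ do rewrite mulrDl -!mulrA.
all: by rewrite big_split /= -!mulr_sumr !sum_delta_mul.
Qed.

Lemma conj_rotmx x z : Num.conj (rotmx x z) = rotmx x z.
Proof.
rewrite mxE; repeat case: ifP => _;
  by rewrite ?(rmorphD, rmorphN, rmorphM, rmorph_nat) /= ?conj_rC.
Qed.

Lemma rotmx_unitary : c ^+ 2 + s ^+ 2 = 1 -> rotmx \is unitarymx.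
Proof.
move=> cs1; apply/unitarymxP/matrixP => x y; rewrite -adjmxE mxE [RHS]mxE.
under eq_bigr => z _ do rewrite adjmx_entry conj_rotmx.
have cs1C : rC c * rC c + rC s * rC s = 1.
  by rewrite /rC -!rmorphM -rmorphD -!expr2 cs1 rmorph1.
have b_neq_a : b != a by rewrite eq_sym.
rewrite rotmx_sum !mxE.
have [?|xa] := eqVneq x a; [subst x | have [?|xb] := eqVneq x b; [subst x |]];
  (have [?|ya] := eqVneq y a; [subst y | have [?|yb] := eqVneq y b; [subst y |]]);
  rewrite ?eqxx ?(negPf a_neq_b) ?(negPf b_neq_a) /=.
all: rewrite ?(eq_sym a y) ?(eq_sym b y) ?(eq_sym y x) ?(negPf xa) ?(negPf xb) ?(negPf ya) ?(negPf yb) /=.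
all: by rewrite ?mulr1 ?mulr0 ?addr0 ?add0r -?cs1C; ring.
Qed.

Lemma rotmx_conj_diag_entry (d : 'rV[C]_n) l :
  (rotmx *m diag_mx d *m adjmx rotmx) l l =
  if l == a then rC c * rC c * d 0 a + rC s * rC s * d 0 b
  else if l == b then rC s * rC s * d 0 a + rC c * rC c * d 0 b else d 0 l.
Proof.
rewrite mxE; under eq_bigr => z _ do rewrite adjmx_entry conj_rotmx mul_mx_diag mxE -mulrA.
have b_neq_a : b != a by rewrite eq_sym.
rewrite rotmx_sum !mxE.
have [?|la] := eqVneq l a; [subst l | have [?|lb] := eqVneq l b; [subst l |]];
  rewrite ?eqxx ?(negPf a_neq_b) ?(negPf b_neq_a) ?(negPf la) ?(negPf lb) /=;
  by rewrite ?mulr1 ?mulr0 ?addr0 ?add0r; ring.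
Qed.

Lemma mxtrace_rotmx_conj_diag (d : 'rV[C]_n) k : (a < k)%N -> (k <= b)%N ->
  \tr (rotmx *m diag_mx d *m adjmx rotmx *m pid_mx k) =
  \tr (diag_mx d *m pid_mx k) - d 0 a + rC c * rC c * d 0 a + rC s * rC s * d 0 b.
Proof.
move=> ak kb; rewrite !mxtrace_mul_pid (bigD1 a) //= [in RHS](bigD1 a) //=.
rewrite (eq_bigr (fun l => diag_mx d l l)) => [|l /andP[lk la]]; last first.
  have lb : l != b by apply: contraTneq lk => ->; rewrite -leqNgt.
  by rewrite rotmx_conj_diag_entry (negPf la) (negPf lb) mxE eqxx mulr1n.
by rewrite rotmx_conj_diag_entry eqxx mxE eqxx mulr1n; ring.
Qed.

End Rotation.

Lemma herm_spectral (R : realType) n (A : 'M[R[i]]_n) : herm_mx A ->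
  exists V (e : 'I_n -> R), V \is unitarymx /\
    A = adjmx V *m diag_mx (\row_j rC (e j)) *m V.
Proof.
move=> hA; have hs : A \is hermsymmx.
  by apply/is_hermitianmxP; rewrite /= expr0 scale1r -adjmxE hA.
have /orthomx_spectralP eA := hermitian_normalmx hs.
have uV := spectral_unitarymx A.
exists (spectralmx A), (fun j => complex.Re (spectral_diag A 0 j)); split; first exact: uV.
have -> : \row_j rC (complex.Re (spectral_diag A 0 j)) = spectral_diag A.
  apply/rowP => j; rewrite mxE; apply: RRe_real.
  by have /mxOverP := hermitian_spectral_diag_real hs; apply.
by rewrite adjmxE -(invmx_unitary uV).
Qed.

Lemma eq_abs_midpoint (R : realFieldType) (x z : R) :
  `|x| = `|z| -> `|(x + z) / 2| = `|x| -> x = z.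
Proof.
have -> : (x + z) / 2 = x / 2 + z / 2 by rewrite mulrDl.
by case: (ler0P x) => ?; case: (ler0P z) => ?; case: (ler0P (x / 2 + z / 2)) => ?; lra.
Qed.

Lemma kparallel_rank_proj_scalar (R : realType) n k (A : 'M[R[i]]_n) :
  (1 <= k)%N -> (k < n)%N -> herm_mx A ->
  (forall P, rank_proj k P -> kparallel k A P) -> exists g : R, A = (rC g)%:M.
Proof.
move=> k_ge1 k_lt_n hA par; have k_le_n := ltnW k_lt_n.
have [V [e [uV eA]]] := herm_spectral hA.
pose T := \sum_(l < n | (l < k)%N) e l.
have rot (a b : 'I_n) (c s : R) : (a < k)%N -> (k <= b)%N -> c ^+ 2 + s ^+ 2 = 1 ->
    `|T - e a + c * c * e a + s * s * e b| = wk k A.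
  move=> ak kb cs; have ab : a != b by apply: contraTneq ak => ->; rewrite -leqNgt.
  have uW := mul_unitarymx (rotmx_unitary ab cs) uV.
  rewrite -(kparallel_trk_proj k_ge1 k_le_n (trk_proj_of_unitary k_le_n uW)
              (par _ (rank_proj_of_unitary k_le_n uW))).
  rewrite [in X in \tr (X *m _)]eA mxtrace_mul_proj_of_unitary //.
  rewrite mxtrace_rotmx_conj_diag // mxtrace_mul_pid -normc_rC.
  congr normc; rewrite /rC !(rmorphD, rmorphN, rmorphM) rmorph_sum /= !mxE.
  by congr (_ + _ + _ + _); apply: eq_bigr => l _; rewrite !mxE eqxx mulr1n.
have eq_e (a b : 'I_n) : (a < k)%N -> (k <= b)%N -> e a = e b.
  move=> ak kb; pose h := Num.sqrt (2^-1 : R).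
  have hh : h * h = 2^-1 by rewrite -expr2 sqr_sqrtr // invr_ge0 ler0n.
  have := rot a b 1 0 ak kb; rewrite expr1n expr0n addr0 => /(_ erefl).
  have := rot a b 0 1 ak kb; rewrite expr1n expr0n add0r => /(_ erefl).
  have := rot a b h h ak kb; rewrite expr2 hh.
  have -> : 2^-1 + 2^-1 = 1 :> R by lra.
  move=> /(_ erefl) at_pi4 at_pi2 at_0.
  have mid : (T + (T - e a + e b)) / 2 = T - e a + 2^-1 * e a + 2^-1 * e b by lra.
  have := @eq_abs_midpoint _ T (T - e a + e b).
  rewrite mid at_pi4; move: at_0 at_pi2; rewrite !(mul0r, mul1r, addr0, subrK) => -> ->.
  by move=> /(_ erefl erefl); lra.
pose a0 : 'I_n := Ordinal (leq_trans k_ge1 k_le_n).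
pose bk : 'I_n := Ordinal k_lt_n.
have e_const i : e i = e bk.
  have [ik|ki] := ltnP i k; first exact: eq_e.
  by rewrite -(eq_e a0 i) //; apply: eq_e.
exists (e bk); rewrite eA (_ : diag_mx _ = (rC (e bk))%:M); last first.
  by apply/matrixP => i j; rewrite !mxE e_const.
by rewrite mul_mx_scalar -scalemxAl unitary_adjmx_mul // scalemx1.
Qed.

Theorem mainTheorem13 (R : realType) (n k : nat) (A : 'M[R[i]]_n) :
  (1 <= k < n)%N -> herm_mx A ->
  ((exists gamma : R, A = (rC gamma)%:M) <->
     (forall B : 'M[R[i]]_n, herm_mx B -> kparallel k A B)) /\
  ((forall B : 'M[R[i]]_n, herm_mx B -> kparallel k A B) <->
     (forall P : 'M[R[i]]_n, rank_proj k P -> kparallel k A P)).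
Proof.
move=> /andP[k_ge1 k_lt_n] hA.
have a_b : (exists g : R, A = (rC g)%:M) -> forall B, herm_mx B -> kparallel k A B.
  by move=> [g ->] B; apply: scalar_kparallel k_ge1 (ltnW k_lt_n) g B.
have b_c : (forall B, herm_mx B -> kparallel k A B) ->
    forall P, rank_proj k P -> kparallel k A P.
  by move=> par P [aP _ _]; apply: par.
have c_a := kparallel_rank_proj_scalar k_ge1 k_lt_n hA.
by split; split; [exact: a_b | move/b_c/c_a | exact: b_c | move/c_a/a_b].
Qed.
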